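(* Let $\varphi$ be a flow on a locally compact metric space $X$, $S\subset X$ a nonempty compact invariant set, and $\mathcal M=\{M_p\mid p\in\mathbb P\}$ an indexed family of mutually disjoint closed invariant subsets of $S$. Then $\mathcal M$ is a Morse predecomposition of $S$ if and only if $T\cap\bigcup_{p\in\mathbb P}M_p\ne\emptyset$ for every nonempty closed invariant set $T\subset S$.
   Context: A full solution is a map $\gamma:\mathbb R\to X$ with $\gamma(s+t)=\varphi(\gamma(s),t)$; it is in $S$ if its image lies in $S$. $\alpha(\gamma)=\bigcap_{t<0}\operatorname{cl}\gamma((-\infty,t])$, $\omega(\gamma)=\bigcap_{t>0}\operatorname{cl}\gamma([t,\infty))$. A set $A$ is invariant if $A=\{x\in A\mid\varphi(x,\mathbb R)\subset A\}$. A full solution $\gamma$ in $S$ is a link from $S_1$ to $S_2$ if $\alpha(\gamma)\cap S_1\ne\emptyset\ne\omega(\gamma)\cap S_2$. A Morse predecomposition of $S$ is an indexed family of mutually disjoint closed invariant subsets $\{M_p\mid p\in\mathbb P\}$ of $S$ such that every full solution in $S$ is a link from $M_p$ to $M_q$ for some $p,q\in\mathbb P$. *)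

From HB Require Import structures.
From mathcomp Require Import all_boot all_order all_algebra.
From mathcomp Require Import all_classical all_reals all_analysis.
Set Implicit Arguments. Unset Strict Implicit. Unset Printing Implicit Defensive.
Import Order.TTheory GRing.Theory Num.Theory.
Import numFieldNormedType.Exports.
Local Open Scope classical_set_scope.
Local Open Scope ring_scope.

Section Flows.
Context {R : realType} {X : pseudoMetricType R}.

Definition is_flow (phi : X -> R -> X) : Prop :=
  [/\ continuous (fun p : X * R => phi p.1 p.2),
      (forall x, phi x 0 = x) &
      (forall x s t, phi (phi x s) t = phi x (s + t))].

Definition full_solution (phi : X -> R -> X) (gamma : R -> X) : Prop :=
  forall s t, gamma (s + t) = phi (gamma s) t.

Definition alpha_limit (gamma : R -> X) : set X :=
  \bigcap_(t in [set t : R | t < 0]) closure (gamma @` [set s | s <= t]).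

Definition omega_limit (gamma : R -> X) : set X :=
  \bigcap_(t in [set t : R | 0 < t]) closure (gamma @` [set s | t <= s]).

Definition invariant_set (phi : X -> R -> X) (A : set X) : Prop :=
  A = [set x | A x /\ (phi x @` setT) `<=` A].

Definition solution_in (gamma : R -> X) (S : set X) : Prop :=
  range gamma `<=` S.

Definition link (phi : X -> R -> X) (S S1 S2 : set X) (gamma : R -> X) : Prop :=
  [/\ full_solution phi gamma, solution_in gamma S,
      alpha_limit gamma `&` S1 !=set0 & omega_limit gamma `&` S2 !=set0].

Definition mutually_disjoint (P : Type) (M : P -> set X) : Prop :=
  forall p q, p <> q -> M p `&` M q = set0.

Definition morse_predecomposition (phi : X -> R -> X) (S : set X)
    (P : Type) (M : P -> set X) : Prop :=
  [/\ mutually_disjoint M,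
      (forall p, [/\ closed (M p), invariant_set phi (M p) & M p `<=` S]) &
      (forall gamma, full_solution phi gamma -> solution_in gamma S ->
         exists p q, link phi S (M p) (M q) gamma)].

End Flows.

From HB Require Import structures.
From mathcomp Require Import all_boot all_order all_algebra.
From mathcomp Require Import all_classical all_reals all_analysis.
Set Implicit Arguments. Unset Strict Implicit. Unset Printing Implicit Defensive.
Import Order.TTheory GRing.Theory Num.Theory.
Import numFieldNormedType.Exports.
Local Open Scope classical_set_scope.
Local Open Scope ring_scope.

(* Limit sets of solutions lying in the compact set S are nonempty, closed,
   invariant and contained in S; alpha-limit sets are handled as omega-limit
   sets of the time-reversed flow.  A Morse predecomposition therefore meets
   every nonempty closed invariant T in S, since T contains the alpha-limit set
   of each of its orbits.  Conversely, applying the hypothesis to alpha(gamma)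
   and omega(gamma) exhibits every solution gamma in S as a link. *)

Lemma closure_sub_closed (T : topologicalType) (A B : set T) :
  closed B -> A `<=` B -> closure A `<=` B.
Proof. by move=> cB AB; rewrite closureE; exact: smallest_sub. Qed.

Lemma continuous_closure_image {T U : topologicalType} {f : T -> U} {A : set T} :
  continuous f -> f @` closure A `<=` closure (f @` A).
Proof.
move=> fc _ [x Ax <-].
suff : closure A `<=` f @^-1` closure (f @` A) by exact.
apply: closure_sub_closed.
  by apply: preimage_closed; [move=> y _; exact: fc | exact: closed_closure].
by move=> y Ay; apply: subset_closure; exists y.
Qed.

Section Flows.
Context {R : realType} {X : pseudoMetricType R}.
Implicit Types (phi : X -> R -> X) (gamma : R -> X) (A : set X).

Lemma invariant_setP phi A :
  invariant_set phi A <-> forall x t, A x -> A (phi x t).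
Proof.
split => [iA x t Ax | iA].
  by move: Ax; rewrite {1}iA => -[_]; apply; exists t.
by apply/seteqP; split => [x Ax | x []//]; split => // _ [t _ <-]; exact: iA.
Qed.

Lemma flow_continuous_section phi t : is_flow phi -> continuous (phi^~ t).
Proof.
case=> phic _ _ x.
apply: (continuous2_cvg _ (phic (x, t))); [exact: cvg_id | exact: cvg_cst].
Qed.

Lemma flow_full_solution phi x : is_flow phi -> full_solution phi (phi x).
Proof. by case=> _ _ phiD s t; rewrite phiD. Qed.

Lemma full_solution_reverse phi gamma : full_solution phi gamma ->
  full_solution (fun x t => phi x (- t)) (fun s => gamma (- s)).
Proof. by move=> fs s t; rewrite -fs opprD. Qed.

Lemma invariant_set_reverse phi A :
  invariant_set (fun x t => phi x (- t)) A <-> invariant_set phi A.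
Proof.
rewrite !invariant_setP; split => iA x t Ax; last exact: iA.
by rewrite -(opprK t); exact: iA.
Qed.

Lemma alpha_limit_reverse gamma :
  alpha_limit gamma = omega_limit (fun s => gamma (- s)).
Proof.
have E t : gamma @` [set s | s <= - t] = (fun s => gamma (- s)) @` [set s | t <= s].
  apply/seteqP; split => _ [s /= hs <-].
    by exists (- s); rewrite ?opprK //= lerNr.
  by exists (- s) => //=; rewrite lerN2.
apply/seteqP; split => x /= h t /= ht.
  by rewrite -E; apply: h => /=; rewrite oppr_lt0.
by rewrite -(opprK t) E; apply: h => /=; rewrite oppr_gt0.
Qed.

Lemma omega_limit_closed gamma : closed (omega_limit gamma).
Proof. by apply: closed_bigI => t _; exact: closed_closure. Qed.

Lemma omega_limit_sub_closure gamma : omega_limit gamma `<=` closure (range gamma).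
Proof.
by move=> x /(_ 1 ltr01); apply: closureS => _ [s _ <-]; exists s.
Qed.

Lemma omega_limit_neq0 gamma K :
  compact K -> range gamma `<=` K -> omega_limit gamma !=set0.
Proof.
move=> cK gK.
have Fp : ProperFilter (gamma x @[x --> +oo]) by exact: fmap_proper_filter.
have FK : (gamma x @[x --> +oo]) K.
  by exists 0; split; [rewrite num_real | move=> x _; apply: gK; exists x].
have [p [_ cp]] := cK _ Fp FK.
exists p => t /= t0 B nB; apply: cp nB; exists t; split; first by rewrite num_real.
by move=> x /ltW tx; exists x.
Qed.

Lemma omega_limit_invariant phi gamma :
  (forall t, continuous (phi^~ t)) -> full_solution phi gamma ->
  invariant_set phi (omega_limit gamma).
Proof.
move=> phic fs; apply/invariant_setP => x t ox tau /= tau0.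
(* phi(., t) maps the tail of gamma after max 1 (tau - t) into the tail after tau *)
pose sigma := Num.max 1 (tau - t).
have sigma0 : 0 < sigma by rewrite lt_max ltr01.
have /(continuous_closure_image (phic t)) :
    ((phi^~ t) @` closure (gamma @` [set s | sigma <= s])) (phi x t).
  by exists x => //; exact: ox.
apply: closureS => _ [_ [s /= hs <-] <-].
exists (s + t); last by rewrite fs.
by rewrite /= -lerBlDr (le_trans _ hs) // le_max lexx orbT.
Qed.

Definition nonempty_closed_invariant phi (S T : set X) : Prop :=
  [/\ T !=set0, closed T, invariant_set phi T & T `<=` S].

Lemma omega_limit_nonempty_closed_invariant phi S gamma :
  hausdorff_space X -> (forall t, continuous (phi^~ t)) -> compact S ->
  full_solution phi gamma -> solution_in gamma S ->
  nonempty_closed_invariant phi S (omega_limit gamma).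
Proof.
move=> hX phic cS fs gS; split.
- exact: omega_limit_neq0 cS gS.
- exact: omega_limit_closed.
- exact: omega_limit_invariant.
- move=> x /omega_limit_sub_closure.
  exact: (closure_sub_closed (compact_closed hX cS) gS).
Qed.

Lemma alpha_limit_nonempty_closed_invariant phi S gamma :
  hausdorff_space X -> is_flow phi -> compact S ->
  full_solution phi gamma -> solution_in gamma S ->
  nonempty_closed_invariant phi S (alpha_limit gamma).
Proof.
move=> hX phif cS fs gS; rewrite alpha_limit_reverse.
have gS' : solution_in (fun s => gamma (- s)) S.
  by move=> _ [s _ <-]; apply: gS; exists (- s).
have [ne cl /invariant_set_reverse inv sub] :=
  omega_limit_nonempty_closed_invariant hX
    (fun t => flow_continuous_section phif) cS (full_solution_reverse fs) gS'.
by split.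
Qed.

Lemma alpha_limit_sub_closure gamma : alpha_limit gamma `<=` closure (range gamma).
Proof.
rewrite alpha_limit_reverse => x /omega_limit_sub_closure.
by apply: closureS => _ [s _ <-]; exists (- s).
Qed.

Section MorsePredecomposition.
Variables (phi : X -> R -> X) (S : set X) (P : Type) (M : P -> set X).
Hypothesis phif : is_flow phi.

Lemma morse_predecomposition_meets_invariant :
  morse_predecomposition phi S M ->
  forall T, nonempty_closed_invariant phi S T ->
    T `&` \bigcup_(p in [set: P]) M p !=set0.
Proof.
case=> _ _ hlink T [[x Tx] cT /invariant_setP iT sT].
have orbitT : range (phi x) `<=` T by move=> _ [t _ <-]; exact: iT.
have [p [_ [_ _ [y [ay Mpy]] _]]] :=
  hlink _ (flow_full_solution x phif) (subset_trans orbitT sT).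
exists y; split; last by exists p.
exact: closure_sub_closed cT orbitT _ (alpha_limit_sub_closure ay).
Qed.

Lemma morse_predecomposition_of_meets_invariant :
  hausdorff_space X -> compact S -> mutually_disjoint M ->
  (forall p, [/\ closed (M p), invariant_set phi (M p) & M p `<=` S]) ->
  (forall T, nonempty_closed_invariant phi S T ->
     T `&` \bigcup_(p in [set: P]) M p !=set0) ->
  morse_predecomposition phi S M.
Proof.
move=> hX cS dM hM meets; split => // gamma fs gS.
have [y [ay [p _ Mpy]]] :=
  meets _ (alpha_limit_nonempty_closed_invariant hX phif cS fs gS).
have [z [oz [q _ Mqz]]] :=
  meets _ (omega_limit_nonempty_closed_invariant hX
             (fun t => flow_continuous_section phif) cS fs gS).
by exists p, q; split => //; [exists y | exists z].
Qed.

End MorsePredecomposition.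

End Flows.

Theorem proposition5p3 (R : realType) (X : pseudoMetricType R)
    (hX : hausdorff_space X) (lcX : locally_compact [set: X])
    (phi : X -> R -> X) (hphi : is_flow phi)
    (S : set X) (S0 : S !=set0) (cS : compact S) (iS : invariant_set phi S)
    (P : Type) (M : P -> set X)
    (dM : mutually_disjoint M)
    (cM : forall p, closed (M p)) (iM : forall p, invariant_set phi (M p))
    (sM : forall p, M p `<=` S) :
  morse_predecomposition phi S M <->
  (forall T : set X, T !=set0 -> closed T -> invariant_set phi T -> T `<=` S ->
     T `&` \bigcup_(p in [set: P]) M p !=set0).
Proof.
split=> [Mdec T T0 cT iT sT | meets].
  by apply: (morse_predecomposition_meets_invariant hphi Mdec); split.
apply: morse_predecomposition_of_meets_invariant => // T [T0 cT iT sT].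
exact: meets.
Qed.
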